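(* Let $n\geq1$ and $\eta\in\Omega$. Then the set of vectors $\overline{T_\eta}\subset\mathbb C^{\lambda_{2,n}}$ is linearly independent.
   Context: $n\geq1$ is fixed. $\Lambda_{2,n}=\{\alpha\in\mathbb N^2:1\leq\alpha_1+\alpha_2\leq n\}$, $\lambda_{2,n}=|\Lambda_{2,n}|$; for $v\in\mathbb N^2$, $\bar v=\big(\binom{v_1}{\alpha_1}\binom{v_2}{\alpha_2}\big)_{\alpha\in\Lambda_{2,n}}\in\mathbb C^{\lambda_{2,n}}$. $\Omega$ is the set of sequences $\eta=(z,d_0,d_1,\ldots,d_r)$ with $z\in\{0,1\}$, $d_0=0$, $d_i\in\mathbb N\setminus\{0\}$ for $1\leq i\leq r$, and $\sum_{i=0}^r d_i=n$. For $j\in\{1,\ldots,n\}$ let $t\in\{1,\ldots,r\}$ be the unique index with $\sum_{i=0}^{t-1}d_i<j\leq\sum_{i=0}^t d_i$ and $c=j-\sum_{i=0}^{t-1}d_i$; define $v_{j,\eta}=(\sum_{i\text{ odd},i<t}d_i+c,0)$ if $z=1,t$ odd; $(0,\sum_{i\text{ even},i<t}d_i+c)$ if $z=1,t$ even; $(0,\sum_{i\text{ odd},i<t}d_i+c)$ if $z=0,t$ odd; $(\sum_{i\text{ even},i<t}d_i+c,0)$ if $z=0,t$ even. Set $T_{j,\eta}=\{v_{j,\eta}+p(1,1):0\leq p\leq n-j\}$ for $1\leq j\leq n$, $T_{0,\eta}=\{(p,p):1\leq p\leq n\}$, $T_\eta=\bigcup_{j=0}^nT_{j,\eta}$ and $\overline{T_\eta}=\{\bar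 v:v\in T_\eta\}$. *)

From mathcomp Require Import all_boot all_algebra.
From mathcomp Require Import complex Rstruct.
From Stdlib Require Rdefinitions.
Set Implicit Arguments. Unset Strict Implicit. Unset Printing Implicit Defensive.
Import GRing.Theory.

Definition Cx : fieldType := (Rdefinitions.R)[i].

Definition Lambda (n : nat) :=
  {a : 'I_n.+1 * 'I_n.+1 | (0 < (a.1 : nat) + (a.2 : nat) <= n)%N}.

Definition lambda (n : nat) : nat := #|{: Lambda n}|.

Definition barv (n : nat) (v : nat * nat) : 'rV[Cx]_(lambda n) :=
  \row_(k < lambda n)
    let a := val (enum_val k) in (('C(v.1, a.1) * 'C(v.2, a.2))%N)%:R%R.

(* eta = (z, d_0 = 0, d_1, ..., d_r) is encoded by z : bool (true = 1, false = 0)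
   and ds = [:: d_1; ...; d_r].  eta is in Omega iff all d_i > 0 and sum = n. *)
Definition inOmega (n : nat) (z : bool) (ds : seq nat) : Prop :=
  all (fun d => 0 < d)%N ds /\ sumn ds = n.

Definition dd (ds : seq nat) (i : nat) : nat :=
  if i is i'.+1 then nth 0%N ds i' else 0%N.

Definition psum (ds : seq nat) (k : nat) : nat := (\sum_(i < k.+1) dd ds i)%N.

(* t = the unique index in {1..r} with sum_{i<t} d_i < j <= sum_{i<=t} d_i *)
Definition tidx (ds : seq nat) (j : nat) : nat :=
  head 0%N [seq k <- iota 1 (size ds) | (j <= psum ds k)%N].

Definition cidx (ds : seq nat) (j : nat) : nat :=
  (j - \sum_(i < tidx ds j) dd ds i)%N.

Definition oddsum (ds : seq nat) (t : nat) : nat :=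
  (\sum_(i < t | odd i) dd ds i)%N.
Definition evensum (ds : seq nat) (t : nat) : nat :=
  (\sum_(i < t | ~~ odd i) dd ds i)%N.

Definition vje (z : bool) (ds : seq nat) (j : nat) : nat * nat :=
  let t := tidx ds j in
  let c := cidx ds j in
  if z then
    (if odd t then (oddsum ds t + c, 0) else (0, evensum ds t + c))%N
  else
    (if odd t then (0, oddsum ds t + c) else (evensum ds t + c, 0))%N.

Definition T0 (n : nat) : seq (nat * nat) := [seq (p, p) | p <- iota 1 n].

Definition Tj (n : nat) (z : bool) (ds : seq nat) (j : nat) : seq (nat * nat) :=
  [seq ((vje z ds j).1 + p, (vje z ds j).2 + p)%N | p <- iota 0 (n - j).+1].

Definition Teta (n : nat) (z : bool) (ds : seq nat) : seq (nat * nat) :=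
  T0 n ++ flatten [seq Tj n z ds j | j <- iota 1 n].

Definition barT (n : nat) (z : bool) (ds : seq nat) : seq 'rV[Cx]_(lambda n) :=
  undup [seq barv n v | v <- Teta n z ds].

(* Write the points of T_eta as  pt l q = b_l + q(1,1),  where b_0 = (0,0) and
   b_l = v_{l,eta}: they lie on the diagonals x - y = const through b_0, ..., b_n,
   and these diagonals are pairwise distinct because the nonzero coordinate of
   v_{j,eta} increases with j within each parity class of t.  A linear relation
   sum_i k_i bar(v_i) = 0 says that h |-> sum_i k_i (h(v_i) - h(0)) kills the
   binomial products C(x,a) C(y,b) with a + b <= n, hence every product of at most
   n affine functions.  For the point pt l q, the product of the diagonals through
   b_0, ..., b_(l-1) and of the vertical lines x = (b_l).1 + i, i < q, has l + q
   factors, vanishes at the origin and at every pt l' q' with (l', q') < (l, q)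
   lexicographically, but not at pt l q; the resulting triangular system forces
   every k_i to be 0. *)

From mathcomp Require Import all_boot all_algebra.
From mathcomp Require Import complex Rstruct.
From mathcomp Require Import ring zify.
Set Implicit Arguments. Unset Strict Implicit. Unset Printing Implicit Defensive.
Import GRing.Theory Num.Theory.

Lemma head_filter (T : Type) (x0 : T) (P : pred T) (s : seq T) :
  head x0 (filter P s) = nth x0 s (find P s).
Proof. by elim: s => //= x s IH; case: (P x). Qed.

Lemma leq_sum_ord (P : pred nat) (F : nat -> nat) t t' : t <= t' ->
  \sum_(i < t | P i) F i <= \sum_(i < t' | P i) F i.
Proof.
move=> le_tt'; rewrite -!(big_mkord P).
by rewrite (@big_cat_nat _ _ _ t 0 t' _ _ (leq0n t) le_tt') leq_addr.
Qed.

Lemma sum_ord_recr (P : pred nat) (F : nat -> nat) t :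
  \sum_(i < t.+1 | P i) F i = \sum_(i < t | P i) F i + (if P t then F t else 0).
Proof. by rewrite big_mkcond [in RHS]big_mkcond big_ord_recr. Qed.

Section Vertices.

Variable ds : seq nat.

Lemma psum_size : psum ds (size ds) = sumn ds.
Proof.
rewrite /psum big_ord_recl add0n sumnE (big_nth 0) big_mkord.
by apply: eq_bigr.
Qed.

Lemma tidx_spec j : 0 < j <= sumn ds ->
  [/\ 0 < tidx ds j, tidx ds j <= size ds
    & \sum_(i < tidx ds j) dd ds i < j <= psum ds (tidx ds j)].
Proof.
move=> /andP[j_gt0 j_le].
set P := fun k => j <= psum ds k.
have size_gt0 : 0 < size ds by case: ds j_le => //=; rewrite leqNgt j_gt0.
have hasP : has P (iota 1 (size ds)).
  apply/hasP; exists (size ds); last by rewrite /P psum_size.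
  by rewrite mem_iota size_gt0 add1n ltnSn.
have find_lt : find P (iota 1 (size ds)) < size ds.
  by rewrite -[X in _ < X](size_iota 1 (size ds)) -has_find.
rewrite /tidx head_filter nth_iota // add1n.
have := nth_find 0 hasP; rewrite nth_iota // add1n /P => Pt.
split => //; rewrite Pt andbT.
case E: (find P (iota 1 (size ds))) => [|f]; first by rewrite big_ord1.
have := @before_find _ 0 P (iota 1 (size ds)) f.
rewrite E ltnSn nth_iota; last by rewrite -E ltnW.
by rewrite add1n /P /psum ltnNge => /(_ isT) ->.
Qed.

Lemma tidx_homo j j' : 0 < j -> j <= j' -> j' <= sumn ds -> tidx ds j <= tidx ds j'.
Proof.
move=> j_gt0 le_jj' j'_le.
have [t_gt0 _ /andP[lt_j _]] := @tidx_spec j ltac:(lia).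
have [_ _ /andP[_ le_j']] := @tidx_spec j' ltac:(lia).
rewrite leqNgt; apply/negP => lt_t.
have := @leq_sum_ord xpredT (dd ds) _ _ lt_t; rewrite /psum in le_j'; lia.
Qed.

Definition vcoord (j : nat) : nat :=
  (if odd (tidx ds j) then oddsum ds (tidx ds j) else evensum ds (tidx ds j))
  + cidx ds j.

Lemma vje_vcoord z j : vje z ds j =
  if z == odd (tidx ds j) then (vcoord j, 0) else (0, vcoord j).
Proof. by rewrite /vje /vcoord; case: z; case: odd. Qed.

Lemma vcoord_gt0 j : 0 < j <= sumn ds -> 0 < vcoord j.
Proof. by move=> /tidx_spec[_ _ /andP[lt_j _]]; rewrite /vcoord /cidx; lia. Qed.

Lemma ltn_sum_pred_add (P : pred nat) t t' c c' :
  t < t' -> P t -> c <= dd ds t -> 0 < c' ->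
  \sum_(i < t | P i) dd ds i + c < \sum_(i < t' | P i) dd ds i + c'.
Proof.
move=> lt_t Pt le_c c'_gt0; have := leq_sum_ord P (dd ds) lt_t.
by rewrite sum_ord_recr Pt; lia.
Qed.

Lemma vcoord_lt j j' : 0 < j -> j < j' -> j' <= sumn ds ->
  odd (tidx ds j) = odd (tidx ds j') -> vcoord j < vcoord j'.
Proof.
move=> j_gt0 lt_jj' j'_le odd_t.
have [t_gt0 _ /andP[lt_j le_j]] := @tidx_spec j ltac:(lia).
have [_ _ /andP[lt_j' _]] := @tidx_spec j' ltac:(lia).
have := tidx_homo j_gt0 (ltnW lt_jj') j'_le.
rewrite /vcoord /cidx -odd_t leq_eqVlt => /orP[/eqP <-|lt_t]; first by case: odd; lia.
have le_c : j - \sum_(i < tidx ds j) dd ds i <= dd ds (tidx ds j).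
  by move: le_j; rewrite /psum big_ord_recr /=; lia.
rewrite /oddsum /evensum; case odd_tj: (odd (tidx ds j)).
- by apply: ltn_sum_pred_add; rewrite ?odd_tj ?subn_gt0.
- by apply: (@ltn_sum_pred_add (fun i => ~~ odd i)); rewrite /= ?odd_tj ?subn_gt0.
Qed.

End Vertices.

Section Lines.

Variables (z : bool) (ds : seq nat).

Definition base (l : nat) : nat * nat := if l is 0 then (0, 0) else vje z ds l.

Definition pt (l q : nat) : nat * nat := ((base l).1 + q, (base l).2 + q).

Lemma base_diag_neq m l : m < l -> l <= sumn ds ->
  (base l).1 + (base m).2 != (base l).2 + (base m).1.
Proof.
case: l => [//|l] lt_ml l_le; have vl_gt0 := @vcoord_gt0 ds l.+1 l_le.
rewrite /base vje_vcoord; case: m lt_ml => [|m] lt_ml.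
  by case: (z == _) => /=; lia.
have vm_gt0 := @vcoord_gt0 ds m.+1 ltac:(lia).
have vlt := @vcoord_lt ds m.+1 l.+1 isT lt_ml l_le.
have odd_eq : (z == odd (tidx ds l.+1)) = (z == odd (tidx ds m.+1)) ->
    odd (tidx ds m.+1) = odd (tidx ds l.+1) by case: z; case: odd; case: odd.
rewrite vje_vcoord; case z_l: (z == _); case z_m: (z == _) => /=; try lia.
all: by have := vlt (odd_eq (etrans z_l (esym z_m))); lia.
Qed.

Lemma mem_Teta n p : p \in Teta n z ds ->
  exists l q, [/\ l + q <= n, 0 < l + q & p = pt l q].
Proof.
rewrite mem_cat => /orP[/mapP[q] | /flatten_mapP[l]].
  rewrite mem_iota => /andP[q_gt0 q_le] ->.
  by exists 0, q; rewrite /pt /= !add0n; split => //; lia.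
rewrite mem_iota => /andP[l_gt0 l_le] /mapP[q]; rewrite mem_iota => /andP[_ q_lt] ->.
by exists l, q; split; [lia | lia | case: l l_gt0 {l_le q_lt}].
Qed.

End Lines.

Lemma mul_binS m a : m * 'C(m, a) = a.+1 * 'C(m, a.+1) + a * 'C(m, a).
Proof.
rewrite mul_bin_left -mulnDl; case: (leqP a m) => [le_am|lt_ma]; first by rewrite subnK.
by rewrite bin_small // !muln0.
Qed.

Lemma divnMDl_small N l q : q < N -> (l * N + q) %/ N = l.
Proof. by move=> lt_qN; rewrite divnMDl ?divn_small ?addn0 //; lia. Qed.

Lemma lex_of_ltn N l q l' q' : q < N -> q' < N ->
  l' * N + q' < l * N + q -> l' < l \/ l' = l /\ q' < q.
Proof.
move=> lt_qN lt_q'N lt_r; have := leq_div2r N (ltnW lt_r).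
rewrite !divnMDl_small // leq_eqVlt => /orP[/eqP eq_l|]; last by left.
by right; move: lt_r; rewrite eq_l ltn_add2l.
Qed.

Lemma lex_of_eq N l q l' q' : q < N -> q' < N ->
  l' * N + q' = l * N + q -> l' = l /\ q' = q.
Proof.
move=> lt_qN lt_q'N eq_r.
have eq_l : l' = l by rewrite -(divnMDl_small l' lt_q'N) eq_r divnMDl_small.
by move: eq_r; rewrite eq_l => /addnI.
Qed.

Local Open Scope ring_scope.

Definition binom2 (R : nzSemiRingType) (a b : nat) (p : nat * nat) : R :=
  ('C(p.1, a) * 'C(p.2, b))%:R.

Definition affine (R : nzSemiRingType) (c : R * R * R) (p : nat * nat) : R :=
  c.1.1 * p.1%:R + c.1.2 * p.2%:R + c.2.

Lemma binom2_mulX (R : nzSemiRingType) a b p :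
  p.1%:R * binom2 R a b p = a.+1%:R * binom2 R a.+1 b p + a%:R * binom2 R a b p.
Proof. by rewrite /binom2 -!natrM -natrD !mulnA -mulnDl mul_binS. Qed.

Lemma binom2_mulY (R : nzSemiRingType) a b p :
  p.2%:R * binom2 R a b p = b.+1%:R * binom2 R a b.+1 p + b%:R * binom2 R a b p.
Proof.
rewrite /binom2 -!natrM -natrD mulnCA [in RHS]mulnCA [X in (_ + X)%N]mulnCA.
by rewrite -mulnDr mul_binS.
Qed.

Section Annihilation.

Variables (R : comNzRingType) (n : nat) (L : (nat * nat -> R) -> R).
Hypothesis L_ext : forall g h, g =1 h -> L g = L h.
Hypothesis L_lin : forall a b g h,
  L (fun p => a * g p + b * h p) = a * L g + b * L h.
Hypothesis L_binom2 : forall a b, (a + b <= n)%N -> L (binom2 R a b) = 0.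

Let annihilated d g :=
  forall a b, (a + b + d <= n)%N -> L (fun p => g p * binom2 R a b p) = 0.

Lemma annihilated_ext d g h : g =1 h -> annihilated d g -> annihilated d h.
Proof.
by move=> eq_gh Lg a b le_n; rewrite -(Lg a b le_n); apply: L_ext => p; rewrite eq_gh.
Qed.

Lemma annihilated_le d d' g : (d <= d')%N -> annihilated d g -> annihilated d' g.
Proof. by move=> le_dd' Lg a b le_n; apply: Lg; lia. Qed.

Lemma annihilated_lin d a b g h : annihilated d g -> annihilated d h ->
  annihilated d (fun p => a * g p + b * h p).
Proof.
move=> Lg Lh x y le_n.
rewrite (@L_ext _ (fun p => a * (g p * binom2 R x y p) + b * (h p * binom2 R x y p))).
  by rewrite L_lin Lg // Lh // !mulr0 addr0.
by move=> p; ring.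
Qed.

Lemma annihilated_mulX d g : annihilated d g -> annihilated d.+1 (fun p => p.1%:R * g p).
Proof.
move=> Lg a b le_n.
rewrite (@L_ext _ (fun p =>
  a.+1%:R * (g p * binom2 R a.+1 b p) + a%:R * (g p * binom2 R a b p))).
  by rewrite L_lin !Lg ?mulr0 ?addr0 //; lia.
by move=> p; rewrite mulrAC binom2_mulX; ring.
Qed.

Lemma annihilated_mulY d g : annihilated d g -> annihilated d.+1 (fun p => p.2%:R * g p).
Proof.
move=> Lg a b le_n.
rewrite (@L_ext _ (fun p =>
  b.+1%:R * (g p * binom2 R a b.+1 p) + b%:R * (g p * binom2 R a b p))).
  by rewrite L_lin !Lg ?mulr0 ?addr0 //; lia.
by move=> p; rewrite mulrAC binom2_mulY; ring.
Qed.

Lemma annihilated_affine c d g : annihilated d g ->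
  annihilated d.+1 (fun p => affine c p * g p).
Proof.
move=> Lg; apply: (@annihilated_ext _ (fun p =>
  c.1.1 * (p.1%:R * g p) + 1 * (c.1.2 * (p.2%:R * g p) + c.2 * g p))).
  by move=> p; rewrite /affine; ring.
apply: annihilated_lin; first exact: annihilated_mulX.
by apply: annihilated_lin; [exact: annihilated_mulY | exact: annihilated_le Lg].
Qed.

Lemma L_prod_affine_eq0 cs :
  (size cs <= n)%N -> L (fun p => \prod_(c <- cs) affine c p) = 0.
Proof.
have Lprod : annihilated (size cs) (fun p => \prod_(c <- cs) affine c p).
  elim: cs => [|c cs IH] /=.
    apply: (@annihilated_ext _ (fun=> 1)) => [p|a b]; first by rewrite big_nil.
    by rewrite addn0 => le_n; rewrite -(L_binom2 le_n); apply: L_ext => p; rewrite mul1r.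
  by apply: annihilated_ext (annihilated_affine c IH) => p; rewrite big_cons.
move=> le_n; rewrite -(Lprod 0 0) //; apply: L_ext => p.
by rewrite /binom2 !bin0 mulr1.
Qed.

End Annihilation.

Lemma triangular_kernel (R : idomainType) (I : finType) (r : I -> nat)
    (M : I -> I -> R) (k : I -> R) :
  injective r -> (forall i j, (r j < r i)%N -> M i j = 0) -> (forall i, M i i != 0) ->
  (forall i, \sum_j k j * M i j = 0) -> forall i, k i = 0.
Proof.
move=> r_inj M_trig M_diag k_ker.
have step i : (forall j, (r i < r j)%N -> k j = 0) -> k i = 0.
  move=> k_above; have := k_ker i; rewrite (bigD1 i) //= big1 ?addr0.
    by move/eqP; rewrite mulf_eq0 (negbTE (M_diag i)) orbF => /eqP.
  move=> j neq_ji; case: (ltngtP (r j) (r i)) => [lt_ji|lt_ij|/r_inj eq_ji].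
  - by rewrite M_trig ?mulr0.
  - by rewrite k_above ?mul0r.
  - by rewrite eq_ji eqxx in neq_ji.
pose N := (\max_j r j)%N.
suff k0 d i : (N <= r i + d)%N -> k i = 0 by move=> i; apply: (k0 N); rewrite leq_addl.
elim: d i => [|d IH] i le_N; apply: step => j lt_ij.
  by have := @leq_bigmax _ r j; rewrite -/N; lia.
by apply: IH; lia.
Qed.

(* The index (0, 0) is missing from Lambda_{2,n}; subtracting h (0, 0) lets a
   relation between the bar v also kill the constant binomial product. *)
Definition eval0 (R : comNzRingType) (I : finType) (k : I -> R) (p : I -> nat * nat)
  (h : nat * nat -> R) : R := \sum_i k i * (h (p i) - h (0, 0)%N).

Lemma eval0_ext (R : comNzRingType) (I : finType) (k : I -> R) p g h :
  g =1 h -> eval0 k p g = eval0 k p h.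
Proof. by move=> eq_gh; apply: eq_bigr => i _; rewrite !eq_gh. Qed.

Lemma eval0_lin (R : comNzRingType) (I : finType) (k : I -> R) p a b g h :
  eval0 k p (fun v => a * g v + b * h v) = a * eval0 k p g + b * eval0 k p h.
Proof.
by rewrite /eval0 !mulr_sumr -big_split /=; apply: eq_bigr => i _; ring.
Qed.

Lemma eval0_binom2 n (I : finType) (k : I -> Cx) (p : I -> nat * nat) :
  \sum_i k i *: barv n (p i) = 0 ->
  forall a b, (a + b <= n)%N -> eval0 k p (binom2 Cx a b) = 0.
Proof.
move=> rel a b le_n.
have [/andP[/eqP-> /eqP->]|ab_neq0] := boolP ((a == 0%N) && (b == 0%N)).
  by rewrite /eval0 big1 // => i _; rewrite /binom2 !bin0 subrr mulr0.
have ab_in : (0 < (inord a : 'I_n.+1) + (inord b : 'I_n.+1) <= n)%N.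
  by rewrite !inordK; lia.
pose ab : Lambda n := exist _ (inord a, inord b) ab_in.
have := congr1 (fun v : 'rV[Cx]_(lambda n) => v 0 (enum_rank ab)) rel.
rewrite /= summxE mxE => <-; apply: eq_bigr => i _.
rewrite !mxE enum_rankK /= !inordK /binom2 /= ?bin0n; try lia.
by move: ab_neq0; case: eqP; case: eqP => //= *; rewrite subr0.
Qed.

Section Separation.

Variables (R : numDomainType) (z : bool) (ds : seq nat).

Definition sep_forms (l q : nat) : seq (R * R * R) :=
  [seq (1, -1, (base z ds m).2%:R - (base z ds m).1%:R) | m <- iota 0 l] ++
  [seq (1, 0, - ((base z ds l).1 + i)%:R) | i <- iota 0 q].

Definition sep (l q : nat) (p : nat * nat) : R :=
  \prod_(c <- sep_forms l q) affine c p.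

Lemma size_sep_forms l q : size (sep_forms l q) = (l + q)%N.
Proof. by rewrite size_cat !size_map !size_iota. Qed.

Lemma sep_pt_eq0 l q l' q' : (l' < l)%N \/ l' = l /\ (q' < q)%N ->
  sep l q (pt z ds l' q') = 0.
Proof.
move=> lex; apply/eqP; rewrite prodf_seq_eq0 has_cat !has_map; apply/orP.
case: lex => [lt_l|[-> lt_q]]; [left | right]; apply/hasP.
- by exists l'; rewrite ?mem_iota //= /affine /pt /= !natrD; apply/eqP; ring.
- by exists q'; rewrite ?mem_iota //= /affine /pt /= !natrD; apply/eqP; ring.
Qed.

Lemma sep_pt_neq0 l q : (l <= sumn ds)%N -> sep l q (pt z ds l q) != 0.
Proof.
move=> l_le; rewrite prodf_seq_neq0 all_cat !all_map; apply/andP; split; apply/allP.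
- move=> m; rewrite mem_iota /affine /pt /= => lt_ml.
  have -> : 1 * ((base z ds l).1 + q)%:R + -1 * ((base z ds l).2 + q)%:R
      + ((base z ds m).2%:R - (base z ds m).1%:R)
    = ((base z ds l).1 + (base z ds m).2)%:R - ((base z ds l).2 + (base z ds m).1)%:R :> R.
    by rewrite !natrD; ring.
  by rewrite subr_eq0 eqr_nat base_diag_neq.
- move=> i; rewrite mem_iota /affine /pt /= => lt_iq.
  rewrite mul1r mul0r addr0 subr_eq0 eqr_nat eqn_add2l; lia.
Qed.

Lemma sep_origin l q : (0 < l + q)%N -> sep l q (0, 0)%N = 0.
Proof. by move=> lq_gt0; apply: (@sep_pt_eq0 _ _ 0 0); lia. Qed.

End Separation.

Lemma sum_sep_eq0 n z ds (I : finType) (k : I -> Cx) (p : I -> nat * nat) l q :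
  \sum_i k i *: barv n (p i) = 0 -> (0 < l + q <= n)%N ->
  \sum_i k i * sep Cx z ds l q (p i) = 0.
Proof.
move=> rel /andP[lq_gt0 lq_le].
have := L_prod_affine_eq0 (@eval0_ext _ _ k p) (@eval0_lin _ _ k p) (eval0_binom2 rel)
  (ltac:(by rewrite size_sep_forms) : (size (sep_forms Cx z ds l q) <= n)%N).
move=> L0; rewrite -[RHS]L0; apply: eq_bigr => i _.
by move: (sep_origin Cx z ds lq_gt0); rewrite /sep => ->; rewrite subr0.
Qed.

Lemma barT_pt n z ds (j : 'I_(size (barT n z ds))) : exists lq : nat * nat,
  [/\ (lq.1 + lq.2 <= n)%N, (0 < lq.1 + lq.2)%N
    & barv n (pt z ds lq.1 lq.2) = (barT n z ds)`_j].
Proof.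
have : (barT n z ds)`_j \in map (barv n) (Teta n z ds) by rewrite -mem_undup mem_nth.
case/mapP=> v /mem_Teta[l [q [? ? ->]]] ->.
by exists (l, q).
Qed.

Theorem proposition2p9 (n : nat) (z : bool) (ds : seq nat) :
  (1 <= n)%N -> inOmega n z ds -> free (barT n z ds).
Proof.
move=> _ [_ sum_ds]; set X := barT n z ds.
apply/(@freeP _ _ _ (in_tuple X)) => k rel.
have /fin_all_exists[lq lqP] := @barT_pt n z ds.
pose p j := pt z ds (lq j).1 (lq j).2.
have {}rel : \sum_j k j *: barv n (p j) = 0.
  by rewrite -[RHS]rel; apply: eq_bigr => j _; have [_ _ ->] := lqP j.
apply: (@triangular_kernel Cx _ (fun j => (lq j).1 * n.+1 + (lq j).2)%N
          (fun i j => sep Cx z ds (lq i).1 (lq i).2 (p j))).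
- move=> i j eq_r; have [le_i _ Xi] := lqP i; have [le_j _ Xj] := lqP j.
  have [eq_l eq_q] : (lq i).1 = (lq j).1 /\ (lq i).2 = (lq j).2.
    by apply: (lex_of_eq _ _ eq_r); lia.
  apply/val_inj/eqP; rewrite -(nth_uniq 0 (ltn_ord i) (ltn_ord j) (undup_uniq _)).
  by rewrite -Xi -Xj eq_l eq_q.
- move=> i j lt_r; have [le_i _ _] := lqP i; have [le_j _ _] := lqP j.
  by apply: sep_pt_eq0; apply: lex_of_ltn lt_r; lia.
- by move=> i; have [le_i _ _] := lqP i; apply: sep_pt_neq0; lia.
- move=> i; have [le_i pos_i _] := lqP i.
  by apply: (@sum_sep_eq0 n z ds _ k p) => //; lia.
Qed.
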